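(* Let $k$ be a positive integer and $2\le l\le k+4$. Let $N^l_k$ be the lattice ${\mathbb{Z}}^{l+1}$ with basis $\ell_0,\dots,\ell_l$ and scalar product $(\ell_0,\ell_0)=k$, $(\ell_i,\ell_i)=-1$ for $1\le i\le l$, $(\ell_i,\ell_j)=0$ for $i\ne j$, and let $\omega=-\frac{k+2}{k}\ell_0+\ell_1+\dots+\ell_l\in N^l_k\otimes{\mathbb{Q}}$. Let $R^l_k$ be the set of $\ell\in N^l_k$ with $(\ell,\ell)=-2$ and $(\ell,\omega)=0$. Then $R^l_k\subset\omega^\perp$ is a root system. If $l\ge k+2$, it is a root system in the vector space $\omega^\perp\otimes_{\mathbb{Z}}{\mathbb{R}}\subset N^l_k\otimes_{\mathbb{Z}}{\mathbb{R}}$. If $2\le l<k+2$, $R^l_k$ spans a hyperplane in $\omega^\perp\otimes_{\mathbb{Z}}{\mathbb{R}}$.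
   Context: $\omega^\perp$ denotes the sublattice of $N^l_k$ of elements orthogonal to $\omega$. A root system in a Euclidean space $V$ is a finite spanning set $R$ such that the only multiples of $x\in R$ in $R$ are $\pm x$, $R$ is closed under the reflections in its elements, and $2(x,m)/(x,x)\in{\mathbb{Z}}$ for all $x,m\in R$ (here with respect to the negative of the scalar product, which is positive definite on $\omega^\perp$). *)

From HB Require Import structures.
From mathcomp Require Import all_boot all_order all_algebra.
From mathcomp Require Import reals.
Set Implicit Arguments. Unset Strict Implicit. Unset Printing Implicit Defensive.
Import Order.TTheory GRing.Theory Num.Theory.
Local Open Scope ring_scope.

(* The real vector space N^l_k (x) R is modelled as 'rV[R]_(l.+1); coordinate
   i corresponds to the basis vector \ell_i (coordinate 0 is \ell_0). *)

Definition Nform (R : realType) (k l : nat) (x y : 'rV[R]_(l.+1)) : R :=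
  \sum_(i < l.+1) (if i == ord0 then k%:R else -1) * x 0 i * y 0 i.

(* the negative of the scalar product (positive definite on omega^perp) *)
Definition Eform (R : realType) (k l : nat) (x y : 'rV[R]_(l.+1)) : R :=
  - Nform k x y.

Definition omega (R : realType) (k l : nat) : 'rV[R]_(l.+1) :=
  \row_(i < l.+1) (if i == ord0 then - ((k + 2)%:R / k%:R) else 1).

Definition in_lattice (R : realType) (l : nat) (x : 'rV[R]_(l.+1)) : Prop :=
  forall i, x 0 i \is a Num.int.

Definition Rlk_roots (R : realType) (k l : nat) (x : 'rV[R]_(l.+1)) : Prop :=
  [/\ in_lattice x, Nform k x x = -2 & Nform k x (omega R k l) = 0].

Definition omega_perp (R : realType) (k l : nat) : {vspace 'rV[R]_(l.+1)} :=
  lker (linfun (fun x : 'rV[R]_(l.+1) => (Nform k x (omega R k l) : R^o))).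

Definition root_system (R : realType) (n : nat)
    (E : 'rV[R]_n -> 'rV[R]_n -> R) (V : {vspace 'rV[R]_n}) (s : seq 'rV[R]_n) :
    Prop :=
  [/\ (forall v, v \in V -> v != 0 -> 0 < E v v),
      <<s>>%VS = V,
      (forall x (c : R), x \in s -> c *: x \in s -> c = 1 \/ c = -1),
      (forall x m, x \in s -> m \in s -> m - (2 * E x m / E x x) *: x \in s)
    & (forall x m, x \in s -> m \in s -> 2 * E x m / E x x \is a Num.int)].

From HB Require Import structures.
From mathcomp Require Import all_boot all_order all_algebra.
From mathcomp Require Import reals.
From mathcomp Require Import ring lra.
Set Implicit Arguments.
Unset Strict Implicit.
Unset Printing Implicit Defensive.
Import Order.TTheory GRing.Theory Num.Theory.
Local Open Scope ring_scope.

(* Write x = a ell_0 + b_1 ell_1 + ... + b_l ell_l.  Then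
   (x, x) = k a^2 - sum b_i^2, and x is orthogonal to omega iff
   sum b_i = -(k + 2) a, so by Cauchy-Schwarz (k + 2)^2 a^2 <= l * sum b_i^2 on
   omega^perp.  For l <= k + 4 this makes -(., .) positive definite on
   omega^perp and bounds the coordinates of the roots, so R^l_k is finite; it is
   a root system because the reflection in a root preserves the lattice, the
   form and omega.  The roots ell_i - ell_j span the hyperplane a = 0 of
   omega^perp.  If l >= k + 2 the root ell_0 - ell_1 - ... - ell_(k+2) lies
   outside it; if l < k + 2 the same inequality together with (x, x) = -2
   forces a = 0 for every root. *)

Lemma sqr_sum_le (R : realFieldType) (n : nat) (b : 'I_n -> R) :
  (\sum_j b j) ^+ 2 <= n%:R * \sum_j b j ^+ 2.
Proof.
set S := \sum_j b j; set Q := \sum_j b j ^+ 2.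
have : 0 <= \sum_i \sum_j (b i - b j) ^+ 2.
  by do 2!apply: sumr_ge0 => ? _; apply: sqr_ge0.
have inner i : \sum_j (b i - b j) ^+ 2 = n%:R * b i ^+ 2 - (b i * S) *+ 2 + Q.
  rewrite (eq_bigr _ (fun j _ => sqrrB (b i) (b j))) !big_split /=.
  by rewrite sumrN sumr_const card_ord sumrMnl -mulr_sumr -/S -/Q mulr_natl.
have -> : \sum_i \sum_j (b i - b j) ^+ 2 = (n%:R * Q - S ^+ 2) *+ 2.
  rewrite (eq_bigr _ (fun i _ => inner i)) !big_split /=.
  rewrite sumrN sumr_const card_ord.
  by rewrite sumrMnl -mulr_suml -mulr_sumr -/S -/Q -[Q *+ n]mulr_natl; ring.
by rewrite pmulrn_lge0 // subr_ge0.
Qed.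

Lemma sum_delta (R : nzSemiRingType) (I : finType) (i : I) (F : I -> R) :
  \sum_j F j * (j == i)%:R = F i.
Proof.
rewrite (bigD1 i) //= eqxx mulr1 big1 ?addr0 // => j /negbTE ->.
exact: mulr0.
Qed.

Section Coordinates.
Variables (R : realType) (l : nat).
Implicit Types (x : 'rV[R]_(l.+1)) (a : R) (b : 'I_l -> R).

Definition lvec a b : 'rV[R]_(l.+1) :=
  \row_i (if unlift ord0 i is Some j then b j else a).

Definition tail x (j : 'I_l) : R := x 0 (lift ord0 j).

Lemma lvec0 a b : lvec a b 0 ord0 = a.
Proof. by rewrite mxE unlift_none. Qed.

Lemma tail_lvec a b : tail (lvec a b) =1 b.
Proof. by move=> j; rewrite /tail mxE liftK. Qed.

Lemma lvec_eta x : x = lvec (x 0 ord0) (tail x).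
Proof. by apply/rowP => i; rewrite mxE; case: unliftP => [j ->|->]. Qed.

Lemma lvec_lattice a b :
  a \is a Num.int -> (forall j, b j \is a Num.int) -> in_lattice (lvec a b).
Proof. by move=> ha hb i; rewrite mxE; case: unliftP. Qed.

Lemma row_eq0_head_tail x : x 0 ord0 = 0 -> \sum_j tail x j ^+ 2 = 0 -> x = 0.
Proof.
move=> x0 /eqP; rewrite psumr_eq0 => [/allP tail0|j _]; last exact: sqr_ge0.
rewrite [x]lvec_eta x0; apply/rowP => i; rewrite !mxE; case: unliftP => // j _.
by apply/eqP; rewrite -sqrf_eq0; apply: tail0; rewrite mem_index_enum.
Qed.

Definition ell0 : 'rV[R]_(l.+1) := lvec 1 (fun=> 0).

Definition ell_diff (p q : 'I_l) : 'rV[R]_(l.+1) :=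
  lvec 0 (fun j => (j == p)%:R - (j == q)%:R).

Definition lvec1 (m : nat) (c : R) : 'rV[R]_(l.+1) :=
  lvec 1 (fun j => if (j < m)%N then c else 0).

Lemma sum_tail_lvec1 m c (F : R -> R) : (m <= l)%N -> F 0 = 0 ->
  \sum_j F (tail (lvec1 m c) j) = F c *+ m.
Proof.
move=> m_le F0; under eq_bigr do rewrite tail_lvec (fun_if F) F0.
rewrite -big_mkcond /= -(big_ord_widen l (fun=> F c) m_le).
by rewrite sumr_const card_ord.
Qed.

End Coordinates.

Section Form.
Variables (R : realType) (k l : nat).
Implicit Types (x y z : 'rV[R]_(l.+1)).

Lemma NformE x y :
  Nform k x y = k%:R * x 0 ord0 * y 0 ord0 - \sum_j tail x j * tail y j.
Proof.
rewrite /Nform big_ord_recl eqxx -sumrN; congr (_ + _).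
by apply: eq_bigr => j _; rewrite eq_sym (negbTE (neq_lift _ _)) !mulNr mul1r.
Qed.

Lemma Nform_self x : Nform k x x = k%:R * x 0 ord0 ^+ 2 - \sum_j tail x j ^+ 2.
Proof. by rewrite NformE -mulrA -expr2; under eq_bigr do rewrite -expr2. Qed.

Lemma Nform_ell0 x : Nform k x (ell0 R l) = k%:R * x 0 ord0.
Proof.
by rewrite NformE lvec0 mulr1 big1 ?subr0 // => j _; rewrite tail_lvec mulr0.
Qed.

Lemma NformC x y : Nform k x y = Nform k y x.
Proof. by apply: eq_bigr => i _; rewrite mulrAC. Qed.

Lemma NformDZl c x y z : Nform k (c *: x + y) z = c * Nform k x z + Nform k y z.
Proof.
rewrite /Nform mulr_sumr -big_split.
by apply: eq_bigr => i _; rewrite !mxE /=; ring.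
Qed.

Lemma NformDZr c x y z : Nform k z (c *: x + y) = c * Nform k z x + Nform k z y.
Proof. by rewrite NformC NformDZl !(NformC z). Qed.

Lemma NformZl c x y : Nform k (c *: x) y = c * Nform k x y.
Proof.
by rewrite /Nform mulr_sumr; apply: eq_bigr => i _; rewrite mxE; ring.
Qed.

Lemma Nform_int x y : in_lattice x -> in_lattice y -> Nform k x y \is a Num.int.
Proof.
move=> xZ yZ; apply: rpred_sum => i _; rewrite rpredM ?rpredM //.
by case: (i == ord0); rewrite ?rpredN ?rpred1 ?natr_int.
Qed.

End Form.

Definition Nform_fun (R : realType) (k l : nat) (y x : 'rV[R]_(l.+1)) : R^o :=
  Nform k x y.

Lemma Nform_fun_linear (R : realType) (k l : nat) (y : 'rV[R]_(l.+1)) :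
  linear (Nform_fun k y).
Proof. by move=> c x z; rewrite /Nform_fun NformDZl. Qed.

HB.instance Definition _ (R : realType) (k l : nat) (y : 'rV[R]_(l.+1)) :=
  GRing.isLinear.Build R 'rV[R]_(l.+1) R^o *:%R (Nform_fun k y)
    (Nform_fun_linear k y).

Definition Nform_perp (R : realType) (k l : nat) (y : 'rV[R]_(l.+1)) :
  {vspace 'rV[R]_(l.+1)} := lker (linfun (Nform_fun k y)).

Lemma memv_Nform_perp (R : realType) (k l : nat) (x y : 'rV[R]_(l.+1)) :
  (x \in Nform_perp k y) = (Nform k x y == 0).
Proof. by rewrite memv_ker lfunE. Qed.

Section Omega.
Variables (R : realType) (k l : nat).
Hypothesis k_gt0 : (0 < k)%N.
Implicit Types (x : 'rV[R]_(l.+1)).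

Lemma Nform_omega x :
  Nform k x (omega R k l) = - (k + 2)%:R * x 0 ord0 - \sum_j tail x j.
Proof.
have k_neq0 : k%:R != 0 :> R by rewrite pnatr_eq0 -lt0n.
rewrite NformE /tail mxE eqxx; congr (_ - _); first by field.
by apply: eq_bigr => j _; rewrite mxE eq_sym (negbTE (neq_lift _ _)) mulr1.
Qed.

Lemma perp_omega_sqr_le x : Nform k x (omega R k l) = 0 ->
  (k + 2)%:R ^+ 2 * x 0 ord0 ^+ 2 <= l%:R * \sum_j tail x j ^+ 2.
Proof.
rewrite Nform_omega => /eqP; rewrite subr_eq0 => /eqP sum_tail.
by rewrite -exprMn -sqrrN -mulNr sum_tail sqr_sum_le.
Qed.

Lemma roots_head0 x : (l < k + 2)%N -> Rlk_roots k x -> x 0 ord0 = 0.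
Proof.
move=> l_lt [xZ + /perp_omega_sqr_le]; rewrite Nform_self.
set a := x 0 ord0; set Q := \sum_j _ => x_norm CS.
have Q_eq : Q = k%:R * a ^+ 2 + 2 by lra.
have Q_ge0 : 0 <= Q by apply: sumr_ge0 => j _; apply: sqr_ge0.
have l_leR : l%:R <= k%:R + 1 :> R.
  by rewrite -(natrD R k 1) ler_nat addn1 -ltnS -addn2.
have lQ_le : l%:R * Q <= (k%:R + 1) * Q by apply: ler_wpM2r.
apply/eqP; apply: contraT => a_neq0.
have a2_ge1 : 1 <= a ^+ 2 by apply: sqr_intr_ge1 => //; exact: xZ.
have k_ge0 : 0 <= k%:R :> R := ler0n _ _.
rewrite Q_eq natrD in CS lQ_le; nra.
Qed.

Hypothesis l_le : (l <= k + 4)%N.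

(* [(k + 2)^2 > k (k + 4)] is what makes [-Nform] definite on [omega^perp]. *)
Lemma Eform_perp_gt0 x : x \in omega_perp R k l -> x != 0 -> 0 < Eform k x x.
Proof.
rewrite memv_Nform_perp => /eqP /perp_omega_sqr_le.
rewrite /Eform Nform_self opprB.
set a := x 0 ord0; set Q := \sum_j _ => CS x_neq0; rewrite subr_gt0 ltNge.
apply: contra x_neq0 => Q_le; apply/eqP.
have Q_ge0 : 0 <= Q by apply: sumr_ge0 => j _; apply: sqr_ge0.
have l_leR : l%:R <= k%:R + 4 :> R by rewrite -natrD ler_nat.
have lQ_le : l%:R * Q <= (k%:R + 4) * (k%:R * a ^+ 2).
  apply: le_trans (ler_wpM2r Q_ge0 l_leR) _.
  by rewrite ler_wpM2l // addr_ge0 ?ler0n.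
have a2_le0 : a ^+ 2 <= 0 by rewrite natrD in CS; nra.
have a0 : a = 0 by apply/eqP; rewrite -sqrf_eq0 eq_le a2_le0 sqr_ge0.
apply: row_eq0_head_tail => //; apply/eqP; rewrite eq_le Q_ge0 andbT.
by move: Q_le; rewrite a0 expr0n mulr0.
Qed.

Lemma root_coord_bound x : Rlk_roots k x -> forall i, `|x 0 i| <= (k + 4)%:R.
Proof.
case=> _ + /perp_omega_sqr_le; rewrite Nform_self.
set a := x 0 ord0; set Q := \sum_j _ => x_norm CS.
have Q_eq : Q = k%:R * a ^+ 2 + 2 by lra.
have Q_ge0 : 0 <= Q by apply: sumr_ge0 => j _; apply: sqr_ge0.
have l_leR : l%:R <= k%:R + 4 :> R by rewrite -natrD ler_nat.
have k_ge1 : 1 <= k%:R :> R by rewrite ler1n.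
have lQ_le : l%:R * Q <= (k%:R + 4) * Q by apply: ler_wpM2r.
have a2_le : a ^+ 2 <= (k%:R + 4) ^+ 2 by rewrite natrD in CS; nra.
have Q_le : Q <= (k%:R + 4) ^+ 2 by rewrite Q_eq; nra.
move=> i; rewrite -ler_sqr ?nnegrE ?normr_ge0 ?ler0n //.
rewrite real_normK ?num_real // natrD.
case: (unliftP ord0 i) => [j ->|->] //; apply: le_trans Q_le.
by rewrite /Q (bigD1 j) //= lerDl; apply: sumr_ge0 => ? _; apply: sqr_ge0.
Qed.

End Omega.

Section Roots.
Variables (R : realType) (k l : nat).
Implicit Types (x m : 'rV[R]_(l.+1)).

Lemma Eform_root_coef x m : Nform k x x = -2 ->
  2 * Eform k x m / Eform k x x = - Nform k x m.
Proof. by move=> x_norm; rewrite /Eform x_norm opprK; field. Qed.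

(* Since [(x, x) = -2], the reflection in [x] is [m |-> m + (x, m) x]. *)
Lemma Rlk_roots_reflect x m : Rlk_roots k x -> Rlk_roots k m ->
  Rlk_roots k (m + Nform k x m *: x).
Proof.
case=> xZ x_norm x_perp [mZ m_norm m_perp].
have xmZ : Nform k x m \is a Num.int by exact: Nform_int.
rewrite addrC; split.
- by move=> i; rewrite !mxE rpredD ?rpredM.
- rewrite NformDZl !NformDZr x_norm m_norm [Nform k m x]NformC; ring.
- by rewrite NformDZl x_perp m_perp mulr0 addr0.
Qed.

Lemma Rlk_roots_scale x c : Rlk_roots k x -> Rlk_roots k (c *: x) ->
  c = 1 \/ c = -1.
Proof.
case=> _ x_norm _ [_ + _]; rewrite NformZl NformC NformZl x_norm => cx_norm.
have /eqP : c ^+ 2 = 1 by rewrite expr2; lra.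
by rewrite sqrf_eq1 => /orP[/eqP|/eqP]; [left|right].
Qed.

Definition box_vec (f : {ffun 'I_(l.+1) -> 'I_((k + 4).*2.+1)}) :
    'rV[R]_(l.+1) :=
  \row_i ((f i : nat)%:R - (k + 4)%:R).

Definition rootb x := (Nform k x x == -2) && (Nform k x (omega R k l) == 0).

Definition roots : seq 'rV[R]_(l.+1) :=
  undup [seq box_vec f | f <- enum {: {ffun 'I_(l.+1) -> 'I_((k + 4).*2.+1)}}
                       & rootb (box_vec f)].

Lemma roots_uniq : uniq roots.
Proof. exact: undup_uniq. Qed.

Hypotheses (k_gt0 : (0 < k)%N) (l_le : (l <= k + 4)%N).

Lemma mem_roots x : x \in roots <-> Rlk_roots k x.
Proof.
rewrite mem_undup; split.
  case/mapP => f; rewrite mem_filter.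
  move=> /andP[/andP[/eqP x_norm /eqP x_perp] _] ->.
  by split=> // i; rewrite mxE rpredB ?natr_int.
case=> xZ x_norm x_perp; have x_bound := root_coord_bound (R := R) k_gt0 l_le.
pose f : {ffun 'I_(l.+1) -> 'I_((k + 4).*2.+1)} :=
  [ffun i => inord (Num.truncn (x 0 i + (k + 4)%:R))].
have fx : box_vec f = x.
  apply/rowP => i; rewrite !mxE ffunE.
  have /andP[lo hi] : - (k + 4)%:R <= x 0 i <= (k + 4)%:R.
    by rewrite -ler_norml x_bound.
  have shiftN : x 0 i + (k + 4)%:R \is a Num.nat.
    by rewrite natrEint rpredD ?natr_int //= -lerBlDr sub0r.
  rewrite inordK; first by rewrite truncnK // addrK.
  by rewrite truncn_lt_nat ?natrS -?addnn ?natrD; lra.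
apply/mapP; exists f; last by rewrite fx.
by rewrite mem_filter mem_enum andbT /rootb fx x_norm x_perp !eqxx.
Qed.

Lemma roots_root_system (V : {vspace 'rV[R]_(l.+1)}) :
  (forall v, v \in V -> v != 0 -> 0 < Eform k v v) -> <<roots>>%VS = V ->
  root_system (@Eform R k l) V roots.
Proof.
move=> V_pos span_V; split=> // [x c /mem_roots x_root /mem_roots|x m|x m].
- exact: Rlk_roots_scale.
- move=> /mem_roots [xZ x_norm x_perp] /mem_roots m_root.
  rewrite Eform_root_coef // scaleNr opprK.
  by apply/mem_roots/Rlk_roots_reflect.
- move=> /mem_roots [xZ x_norm _] /mem_roots [mZ _ _].
  by rewrite Eform_root_coef // rpredN Nform_int.
Qed.

Lemma span_roots_perp : (<<roots>> <= omega_perp R k l)%VS.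
Proof.
apply/span_subvP => x /mem_roots [_ _ x_perp].
by rewrite memv_Nform_perp x_perp.
Qed.

Lemma ell_diff_root (p q : 'I_l) : p != q -> Rlk_roots k (ell_diff R p q).
Proof.
move=> pq; have delta_sum r : \sum_(j < l) ((j == r)%:R : R) = 1.
  rewrite -[RHS](sum_delta r (fun=> 1)).
  by apply: eq_bigr => j _; rewrite mul1r.
split.
- by apply: lvec_lattice => [|j]; rewrite ?rpredB ?natr_int.
- rewrite Nform_self lvec0 expr0n mulr0 sub0r; congr (- _).
  under eq_bigr do rewrite tail_lvec.
  rewrite (bigD1 p) //= (bigD1 q) 1?eq_sym //= big1.
    by rewrite !eqxx eq_sym (negbTE pq) /=; ring.
  by move=> j /andP[/negbTE-> /negbTE->]; rewrite subrr expr0n.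
- rewrite Nform_omega // lvec0 mulr0 sub0r.
  by under eq_bigr do rewrite tail_lvec; rewrite sumrB !delta_sum subrr oppr0.
Qed.

Lemma perp_head0_in_span x : (0 < l)%N -> Nform k x (omega R k l) = 0 ->
  x 0 ord0 = 0 -> x \in <<roots>>%VS.
Proof.
move=> l_gt0; rewrite Nform_omega // => + x0; rewrite x0 mulr0 sub0r.
move=> /eqP; rewrite oppr_eq0 => /eqP sum_tail; pose j0 : 'I_l := Ordinal l_gt0.
have -> : x = \sum_j tail x j *: ell_diff R j j0.
  apply/rowP => i; rewrite summxE.
  case: (unliftP ord0 i) => [j' ->|->]; last first.
    by rewrite x0 big1 // => j _; rewrite mxE lvec0 mulr0.
  under eq_bigr do
    rewrite mxE -[_ 0 (lift ord0 j')]/(tail _ j') tail_lvec mulrBr.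
  rewrite -[x 0 _]/(tail x j') sumrB -mulr_suml sum_tail mul0r subr0.
  by under eq_bigr do rewrite eq_sym; rewrite sum_delta.
apply: memv_suml => j _; apply: memvZ; have [->|jj0] := eqVneq j j0.
  suff -> : ell_diff R j0 j0 = 0 by apply: mem0v.
  by apply/rowP => i; rewrite !mxE; case: unliftP => *; rewrite ?subrr.
by apply/memv_span/mem_roots/ell_diff_root.
Qed.

Lemma lvec1_perp n c : (n <= l)%N -> c *+ n = - (k + 2)%:R ->
  lvec1 l n c \in omega_perp R k l.
Proof.
move=> n_le cn; rewrite memv_Nform_perp Nform_omega // lvec0.
by rewrite (@sum_tail_lvec1 _ _ _ c id) // cn mulr1 subrr.
Qed.

Lemma omega_perp_decomp w : (0 < l)%N -> w \in omega_perp R k l ->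
  w 0 ord0 = 1 -> omega_perp R k l = (<<roots>> + <[w]>)%VS.
Proof.
move=> l_gt0 w_perp w0; apply/eqP.
rewrite eqEsubv subv_add span_roots_perp -memvE w_perp !andbT.
apply/subvP => v v_perp.
rewrite -[v](subrK (v 0 ord0 *: w)) memv_add ?memvZ ?memv_line //.
apply: perp_head0_in_span => //; last by rewrite !mxE w0 mulr1 subrr.
move: v_perp w_perp; rewrite !memv_Nform_perp => /eqP v_perp /eqP w_perp.
by rewrite -scaleNr addrC NformDZl w_perp v_perp mulr0 addr0.
Qed.

Lemma span_roots_eq_perp : (k + 2 <= l)%N -> <<roots>>%VS = omega_perp R k l.
Proof.
move=> l_ge; set r := lvec1 l (k + 2) (-1 : R).
have r_perp : r \in omega_perp R k l by rewrite lvec1_perp // mulNrn.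
have r_root : Rlk_roots k r.
  split; last by apply/eqP; rewrite -memv_Nform_perp.
    apply: lvec_lattice => [|j]; first exact: rpred1.
    by case: ifP; rewrite ?rpredN ?rpred1 ?rpred0.
  rewrite Nform_self lvec0.
  rewrite (@sum_tail_lvec1 _ _ _ _ (fun t => t ^+ 2)) ?expr0n //.
  by rewrite sqrrN expr1n mulr1 natrD; ring.
have l_gt0 : (0 < l)%N by rewrite (leq_trans _ l_ge) // addn2.
rewrite (omega_perp_decomp l_gt0 r_perp (lvec0 _ _)).
by apply/esym/addv_idPl; rewrite -memvE memv_span // mem_roots.
Qed.

Lemma dim_span_roots_small : (0 < l)%N -> (l < k + 2)%N ->
  \dim <<roots>> = (\dim (omega_perp R k l)).-1.
Proof.
move=> l_gt0 l_lt; set w := lvec1 l 1 (- (k + 2)%:R : R).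
have w_perp : w \in omega_perp R k l by rewrite lvec1_perp ?mulr1n.
have w_neq0 : w != 0.
  apply: contraTneq isT => /rowP/(_ ord0).
  by rewrite lvec0 mxE => /eqP; rewrite oner_eq0.
have span_ell0 : (<<roots>> <= Nform_perp k (ell0 R l))%VS.
  apply/span_subvP => x /mem_roots x_root.
  by rewrite memv_Nform_perp Nform_ell0 (roots_head0 k_gt0) ?mulr0.
rewrite (omega_perp_decomp l_gt0 w_perp (lvec0 _ _)) dimv_disjoint_sum.
  by rewrite dim_vline w_neq0 addn1.
apply/eqP; rewrite -subv0; apply/subvP => y.
move=> /memv_capP[/(subvP span_ell0) + /vlineP[c y_eq]].
rewrite y_eq memv_Nform_perp NformZl Nform_ell0 lvec0 mulr1.
rewrite mulf_eq0 pnatr_eq0 eqn0Ngt k_gt0 orbF => /eqP->.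
by rewrite scale0r memv0.
Qed.

End Roots.

Unset Implicit Arguments.

Theorem proposition5p4 (R : realType) (k l : nat) :
  (0 < k)%N -> (2 <= l)%N -> (l <= k + 4)%N ->
  exists s : seq 'rV[R]_(l.+1),
    [/\ uniq s /\ (forall x, x \in s <-> @Rlk_roots R k l x),
        (<<s>> <= omega_perp R k l)%VS,
        root_system (@Eform R k l) <<s>>%VS s,
        ((k + 2 <= l)%N -> root_system (@Eform R k l) (omega_perp R k l) s)
      & ((l < k + 2)%N -> \dim <<s>>%VS = (\dim (omega_perp R k l)).-1)].
Proof.
move=> k_gt0 l_ge2 l_le; have l_gt0 : (0 < l)%N by apply: leq_trans l_ge2.
have perp_pos := Eform_perp_gt0 (R := R) k_gt0 l_le.
exists (roots R k l); split.
- by split; [exact: roots_uniq | exact: mem_roots].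
- exact: span_roots_perp.
- apply: roots_root_system => // v /(subvP (span_roots_perp _ k_gt0 l_le)).
  exact: perp_pos.
- by move=> l_ge; apply: roots_root_system => //; exact: span_roots_eq_perp.
- exact: dim_span_roots_small.
Qed.
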